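(* For all finite sets of formulas $\Gamma,\Delta$: if $\Gamma\Vdash^{cf}\Delta$, then the sequent $\Gamma\Rightarrow\Delta$ is provable in $\mathsf{CLp}$.
   Context: Fix a countably infinite set $\mathsf{At}$ of atoms. Formulas are built from atoms and the constant $\bot$ using the binary connectives $\land,\lor,\to$. All contexts are finite sets (not multisets) of formulas; a comma denotes union; a subscript $\mathsf{At}$ indicates a finite set of atoms. An atomic sequent has the form $\Gamma_{\mathsf{At}} \Rightarrow \Delta_{\mathsf{At}}$. An atomic rule has finitely many (possibly zero) atomic sequents as premises and one atomic sequent as conclusion; a rule with zero premises is an atomic axiom. A base is a (possibly empty) set of atomic rules; $\mathcal{C}\supseteq\mathcal{B}$ ($\mathcal{C}$ extends $\mathcal{B}$) if $\mathcal{C}$ contains every rule of $\mathcal{B}$. Derivability $\vdash_{\mathcal{B}}$ of atomic sequents is the least relation such that: (Axiom/Weakening) if an atomic axiom with conclusion $\Gamma_{\mathsf{At}}\Rightarrow\Delta_{\mathsf{At}}$ is in $\mathcal{B}$, then $\vdash_{\mathcal{B}} \Theta_{\mathsf{At}},\Gamma_{\mathsf{At}}\Rightarrow\Delta_{\mathsf{At}},\Sigma_{\mathsf{At}}$ for all sets of atoms $\Theta_{\mathsf{At}},\Sigma_{\mathsf{At}}$; (Mix) if a rule with premises $\Gamma^i_{\mathsf{At}}\Rightarrow\Delta^i_{\mathsf{At}}$ ($1\le i\le n$) and conclusion $\Gamma_{\mathsf{At}}\Rightarrow\Delta_{\mathsf{At}}$ is in $\mathcal{B}$ and $\vdash_{\mathcal{B}}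 \Theta^i_{\mathsf{At}},\Gamma^i_{\mathsf{At}}\Rightarrow\Delta^i_{\mathsf{At}},\Sigma^i_{\mathsf{At}}$ for each $i$, then $\vdash_{\mathcal{B}} \Theta^1_{\mathsf{At}},\dots,\Theta^n_{\mathsf{At}},\Gamma_{\mathsf{At}}\Rightarrow\Delta_{\mathsf{At}},\Sigma^1_{\mathsf{At}},\dots,\Sigma^n_{\mathsf{At}}$. Support $\Vdash_{\mathcal{B}}$: (At) $\Vdash_{\mathcal{B}}\Gamma_{\mathsf{At}}$ iff $\vdash_{\mathcal{B}}\ \Rightarrow\Gamma_{\mathsf{At}}$; ($\land$) $\Vdash_{\mathcal{B}} A\land B,\Gamma$ iff $\Vdash_{\mathcal{B}}A,\Gamma$ and $\Vdash_{\mathcal{B}}B,\Gamma$; ($\lor$) $\Vdash_{\mathcal{B}}A\lor B,\Gamma$ iff $\Vdash_{\mathcal{B}}A,B,\Gamma$; ($\to$) $\Vdash_{\mathcal{B}}A\to B,\Gamma$ iff $A\Vdash_{\mathcal{B}}B,\Gamma$; ($\bot$) $\Vdash_{\mathcal{B}}\bot,\Gamma$ iff $\Vdash_{\mathcal{B}}\Gamma$; (Inf) for $n\ge1$, $\{A^1,\dots,A^n\}\Vdash_{\mathcal{B}}\Delta$ iff for every $\mathcal{C}\supseteq\mathcal{B}$ and all sets of atoms $\Theta^1_{\mathsf{At}},\dots,\Theta^n_{\mathsf{At}}$, if $\Vdash_{\mathcal{C}}\Theta^i_{\mathsf{At}},A^i$ for all $i$ then $\Vdash_{\mathcal{C}}\Theta^1_{\mathsf{At}},\dots,\Theta^n_{\mathsf{At}},\Delta$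 (and $\varnothing\Vdash_{\mathcal{B}}\Delta$ means $\Vdash_{\mathcal{B}}\Delta$). The atomic identity rule $\mathsf{Ainit}$ is the atomic axiom $\Gamma_{\mathsf{At}},p\Rightarrow p,\Delta_{\mathsf{At}}$. $\mathcal{HS}$ is the base consisting of all instances of $\mathsf{Ainit}$. Cut-free validity: $\Gamma\Vdash^{cf}\Delta$ iff $\Gamma\Vdash_{\mathcal{B}}\Delta$ for every base $\mathcal{B}\supseteq\mathcal{HS}$. $\mathsf{CLp}$ is the sequent calculus on sequents $\Gamma\Rightarrow\Delta$ (finite sets of formulas) with rules: $\mathsf{init}$: $\Gamma,A\Rightarrow A,\Delta$; $L\bot$: $\Gamma,\bot\Rightarrow\Delta$; $R\bot$: from $\Gamma\Rightarrow\Delta$ infer $\Gamma\Rightarrow\bot,\Delta$; $L\land$: from $A,B,\Gamma\Rightarrow\Delta$ infer $A\land B,\Gamma\Rightarrow\Delta$; $R\land$: from $\Gamma\Rightarrow\Delta,A$ and $\Gamma'\Rightarrow\Delta',B$ infer $\Gamma,\Gamma'\Rightarrow\Delta,\Delta',A\land B$; $L\lor$: from $A,\Gamma\Rightarrow\Delta$ and $B,\Gamma'\Rightarrow\Delta'$ infer $A\lor B,\Gamma,\Gamma'\Rightarrow\Delta,\Delta'$; $R\lor$: from $\Gamma\Rightarrow\Delta,A,B$ infer $\Gamma\Rightarrow\Delta,A\lor B$; $L\to$: from $\Gamma\Rightarrow\Delta,A$ and $B,\Gamma'\Rightarrow\Delta'$ infer $A\to B,\Gamma,\Gamma'\Rightarrow\Delta,\Delta'$;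 $R\to$: from $A,\Gamma\Rightarrow\Delta,B$ infer $\Gamma\Rightarrow\Delta,A\to B$. *)

From HB Require Import structures.
From mathcomp Require Import all_boot.
From mathcomp Require Import finmap.

Set Implicit Arguments.
Unset Strict Implicit.
Unset Printing Implicit Defensive.

Local Open Scope fset_scope.

Definition atom := nat.

Inductive formula : Type :=
| Atom of atom
| Bot
| And of formula & formula
| Or  of formula & formula
| Imp of formula & formula.

Fixpoint f_enc (F : formula) : GenTree.tree nat :=
  match F with
  | Atom p => GenTree.Leaf p
  | Bot => GenTree.Node 0 [::]
  | And A B => GenTree.Node 1 [:: f_enc A; f_enc B]
  | Or A B => GenTree.Node 2 [:: f_enc A; f_enc B]
  | Imp A B => GenTree.Node 3 [:: f_enc A; f_enc B]
  end.

Fixpoint f_dec (t : GenTree.tree nat) : option formula :=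
  match t with
  | GenTree.Leaf p => Some (Atom p)
  | GenTree.Node 0 [::] => Some Bot
  | GenTree.Node 1 [:: a; b] =>
      if (f_dec a, f_dec b) is (Some A, Some B) then Some (And A B) else None
  | GenTree.Node 2 [:: a; b] =>
      if (f_dec a, f_dec b) is (Some A, Some B) then Some (Or A B) else None
  | GenTree.Node 3 [:: a; b] =>
      if (f_dec a, f_dec b) is (Some A, Some B) then Some (Imp A B) else None
  | _ => None
  end.

Lemma f_encK : pcancel f_enc f_dec.
Proof. by elim=> //= [A -> B -> | A -> B -> | A -> B ->]. Qed.

HB.instance Definition _ := Countable.copy formula (pcan_type f_encK).

Definition aseq := ({fset atom} * {fset atom})%type.

Record rule := Rule { premises : seq aseq ; conclusion : aseq }.

Definition base := rule -> Prop.

Definition extends (B C : base) : Prop := forall r, B r -> C r.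

(** Derivability |-_B of atomic sequents (least relation closed under
    Axiom/Weakening and Mix). *)
Inductive derivable (B : base) : {fset atom} -> {fset atom} -> Prop :=
| d_axiom : forall (G D Th Sg : {fset atom}),
    B (Rule [::] (G, D)) -> derivable B (Th `|` G) (D `|` Sg)
| d_mix : forall (ps : seq aseq) (G D : {fset atom}) (Th Sg : nat -> {fset atom}),
    B (Rule ps (G, D)) ->
    (forall i, i < size ps ->
       derivable B (Th i `|` (nth (fset0, fset0) ps i).1)
                   ((nth (fset0, fset0) ps i).2 `|` Sg i)) ->
    derivable B ((\bigcup_(i <- iota 0 (size ps)) Th i) `|` G)
                (D `|` \bigcup_(i <- iota 0 (size ps)) Sg i).

Definition HS : base :=
  fun r => exists (G D : {fset atom}) (p : atom),
      r = Rule [::] (p |` G, p |` D).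

Definition is_atom (F : formula) : bool := if F is Atom _ then true else false.
Definition get_atom (F : formula) : option atom :=
  if F is Atom p then Some p else None.

Definition atomset (Th : {fset atom}) : {fset formula} := [fset Atom p | p in Th].

(** The atoms of a set of formulas (used when all its members are atoms). *)
Definition atoms_of (D : {fset formula}) : {fset atom} :=
  [fset p | p in pmap get_atom (enum_fset D)].

Fixpoint weight (F : formula) : nat :=
  match F with
  | Atom _ => 0
  | Bot => 1
  | And A B | Or A B | Imp A B => (weight A + weight B).+1
  end.

Definition measure (D : {fset formula}) : nat := \sum_(F <- enum_fset D) weight F.

Definition principal (D : {fset formula}) : option formula :=
  ohead [seq F <- enum_fset D | ~~ is_atom F].

(** The recursion is on fuel; the fuel
    supplied by [support] always strictly exceeds [measure] of the argument,
    which strictly decreases in every clause. *)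
Fixpoint supp (n : nat) (B : base) (D : {fset formula}) {struct n} : Prop :=
  match n with
  | 0 => False
  | n'.+1 =>
    match principal D with
    | None => derivable B fset0 (atoms_of D)
    | Some F =>
      let G := D `\ F in
      match F with
      | And A C => supp n' B (A |` G) /\ supp n' B (C |` G)
      | Or A C => supp n' B (A |` (C |` G))
      | Imp A C =>                                  (* (->) via (Inf), n = 1 *)
          forall B', extends B B' -> forall Th : {fset atom},
            supp n' B' (atomset Th `|` [fset A]) ->
            supp n' B' (atomset Th `|` (C |` G))
      | Bot => supp n' B G
      | Atom _ => False (* impossible: principal formulas are non-atomic *)
      end
    end
  end.

Definition support (B : base) (D : {fset formula}) : Prop :=
  supp (measure D).+1 B D.

Definition consequence (B : base) (G D : {fset formula}) : Prop :=
  if G == fset0 then support B D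
  else forall B', extends B B' ->
       forall Th : formula -> {fset atom},
         (forall A, A \in G -> support B' (atomset (Th A) `|` [fset A])) ->
         support B' ((\bigcup_(A <- enum_fset G) atomset (Th A)) `|` D).

Definition cf_valid (G D : {fset formula}) : Prop :=
  forall B, extends HS B -> consequence B G D.

Inductive CLp : {fset formula} -> {fset formula} -> Prop :=
| CLp_init : forall G D A, CLp (A |` G) (A |` D)
| CLp_Lbot : forall G D, CLp (Bot |` G) D
| CLp_Rbot : forall G D, CLp G D -> CLp G (Bot |` D)
| CLp_Land : forall G D A B, CLp (A |` (B |` G)) D -> CLp (And A B |` G) D
| CLp_Rand : forall G D G' D' A B,
    CLp G (A |` D) -> CLp G' (B |` D') -> CLp (G `|` G') (And A B |` (D `|` D'))
| CLp_Lor : forall G D G' D' A B,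
    CLp (A |` G) D -> CLp (B |` G') D' -> CLp (Or A B |` (G `|` G')) (D `|` D')
| CLp_Ror : forall G D A B, CLp G (A |` (B |` D)) -> CLp G (Or A B |` D)
| CLp_Limp : forall G D G' D' A B,
    CLp G (A |` D) -> CLp (B |` G') D' -> CLp (Imp A B |` (G `|` G')) (D `|` D')
| CLp_Rimp : forall G D A B, CLp (A |` G) (B |` D) -> CLp G (Imp A B |` D).

(* CLp is complete for two-valued semantics, so it suffices to show that a
   cut-free valid sequent G => D is classically valid.  Given a valuation v
   making G true, extend HS by the axioms [|- p] for the true atoms p and the
   rules "from [|- q] infer [|-]" for the false atoms q.  This base is sound
   for v, so it does not derive the empty sequent.  On the other hand, in every
   extension of it a succedent containing a true formula is supported, while
   supporting a succedent of false formulas derives the empty sequent.  Hence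
   validity in this base forces a true formula in D. *)

From Pilot Require Import Defs.
From mathcomp Require Import all_boot finmap zify.

Set Implicit Arguments.
Unset Strict Implicit.
Unset Printing Implicit Defensive.

Local Open Scope fset_scope.
Local Open Scope nat_scope.

Lemma measure_sub (A B : {fset formula}) : A `<=` B -> measure A <= measure B.
Proof.
move=> sAB; rewrite /measure [X in _ <= X](big_fsetID _ (mem A)) /=.
rewrite (_ : [fset x in B | x \in A] = A); first exact: leq_addr.
apply/fsetP=> x; rewrite !inE /=; apply/andP/idP => [[]//|xA]; split=> //.
exact: (fsubsetP sAB).
Qed.

Lemma measureU (A B : {fset formula}) : measure (A `|` B) <= measure A + measure B.
Proof.
rewrite /measure (big_fsetID _ (mem A)) /=.
rewrite (_ : [fset x in A `|` B | x \in A] = A); last first.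
  by apply/fsetP=> x; rewrite !inE /=; case: (x \in A); rewrite ?andbF ?andbT ?orbT.
apply: leq_add => //; apply: measure_sub; apply/fsubsetP=> x; rewrite !inE /=.
by case: (x \in A); rewrite ?andbF ?andbT ?orbT //= => /andP[].
Qed.

Lemma measureD1 F D : F \in D -> measure D = weight F + measure (D `\ F).
Proof. by move=> FD; rewrite /measure (big_fsetD1 F FD). Qed.

Lemma measure1 F : measure [fset F] = weight F.
Proof. by rewrite /measure big_seq_fset1. Qed.

Lemma measureU1 F D : measure (F |` D) <= weight F + measure D.
Proof. by rewrite (leq_trans (measureU _ _)) // measure1. Qed.

Lemma mem_atomset Th F : (F \in atomset Th) = (if F is Atom p then p \in Th else false).
Proof. by apply/imfsetP/idP => [[p /= pTh ->] // | ]; case: F => // p pTh; exists p. Qed.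

Lemma atomset0 : atomset fset0 = fset0.
Proof. exact: imfset0. Qed.

Lemma measure_atomsetU Th D : measure (atomset Th `|` D) <= measure D.
Proof.
have mTh0 : measure (atomset Th) = 0.
  by rewrite /measure big1_fset // => F; rewrite mem_atomset; case: F.
by rewrite -[X in _ <= X]add0n -mTh0 measureU.
Qed.

Lemma notin_atomset Th F : ~~ is_atom F -> F \notin atomset Th.
Proof. by rewrite mem_atomset; case: F. Qed.

Lemma mem_atoms_of D p : (p \in atoms_of D) = (Atom p \in D).
Proof.
rewrite /atoms_of; apply/imfsetP/idP => [[q /= + ->] | pD].
  by rewrite mem_pmap => /mapP [[q' | | ? ? | ? ? | ? ?] //= ? [->]].
by exists p => //=; rewrite mem_pmap; apply/mapP; exists (Atom p).
Qed.

Lemma principal_None D : principal D = None -> forall F, F \in D -> is_atom F.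
Proof.
rewrite /principal; case E: [seq F <- _ | _] => [|//] _ F FD.
apply: contraT => nF.
have : F \in [seq F <- enum_fset D | ~~ is_atom F] by rewrite mem_filter nF.
by rewrite E.
Qed.

Lemma principal_Some D F : principal D = Some F -> F \in D /\ ~~ is_atom F.
Proof.
rewrite /principal; case E: [seq F <- _ | _] => [//|G s] /= [<-].
have : G \in [seq F <- enum_fset D | ~~ is_atom F] by rewrite E inE eqxx.
by rewrite mem_filter => /andP[-> ->].
Qed.

Lemma measure_replace1 F A D :
  F \in D -> weight A < weight F -> measure (A |` (D `\ F)) < measure D.
Proof. by move=> /measureD1 -> lt_AF; have := measureU1 A (D `\ F); lia. Qed.

Lemma measure_replace2 F A B D : F \in D -> weight A + weight B < weight F ->
  measure (A |` (B |` (D `\ F))) < measure D.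
Proof.
move=> /measureD1 -> lt_ABF.
have := measureU1 A (B |` (D `\ F)); have := measureU1 B (D `\ F); lia.
Qed.

Lemma derivable_ext B C G D : extends B C -> derivable B G D -> derivable C G D.
Proof.
move=> BC; elim=> [G0 D0 Th Sg /BC | ps G0 D0 Th Sg /BC r _ IH]; first exact: d_axiom.
exact: d_mix.
Qed.

Lemma bigfcupUr (F : nat -> {fset atom}) S r : r != [::] ->
  \bigcup_(i <- r) (F i `|` S) = (\bigcup_(i <- r) F i) `|` S.
Proof.
elim: r => // x [|y r] IH _; first by rewrite !big_cons !big_nil !fsetU0.
rewrite big_cons IH // [in RHS]big_cons.
by apply/fsetP => z; rewrite !inE; case: (z \in F x); case: (z \in S); rewrite ?orbT ?orbF.
Qed.

Lemma derivable_weakr B G D S : derivable B G D -> derivable B G (D `|` S).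
Proof.
move=> d; elim: d S => {G D} [G D Th Sg rB | [|p ps] G D Th Sg rB _ IH] S.
- by rewrite -fsetUA; exact: d_axiom.
- by rewrite /= !big_nil fsetU0; exact: d_axiom.
rewrite -fsetUA -(bigfcupUr Sg S) //; apply: d_mix => // i lt_i.
by rewrite fsetUA; exact: IH.
Qed.

Lemma derivable_subr B G D D' : derivable B G D -> D `<=` D' -> derivable B G D'.
Proof. by move=> d /fsetUidPr <-; exact: derivable_weakr. Qed.

Fixpoint eval (v : atom -> bool) (F : formula) : bool :=
  match F with
  | Atom p => v p
  | Bot => false
  | And A B => eval v A && eval v B
  | Or A B => eval v A || eval v B
  | Imp A B => eval v A ==> eval v B
  end.

Section ValuationBase.

Variable v : atom -> bool.

Definition valuation_base : base := fun r =>
  HS r \/ (exists p, v p /\ r = Rule [::] (fset0, [fset p]))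
       \/ (exists q, ~~ v q /\ r = Rule [:: (fset0, [fset q])] (fset0, fset0)).

Lemma HS_valuation_base : extends HS valuation_base.
Proof. by move=> r; left. Qed.

Lemma valuation_base_axiom_sound G D : valuation_base (Rule [::] (G, D)) ->
  (forall p, p \in G -> v p) -> exists2 p, p \in D & v p.
Proof.
case=> [[G1 [D1 [p [-> ->]]]] | [[p [vp [-> ->]]] | [q [_ //]]]] G_true.
  by exists p; rewrite ?fsetU11 //; apply: G_true; rewrite fsetU11.
by exists p; rewrite ?inE.
Qed.

Lemma valuation_base_sound G D : derivable valuation_base G D ->
  (forall p, p \in G -> v p) -> exists2 p, p \in D & v p.
Proof.
elim=> {G D} [G D Th Sg rB | ps G D Th Sg rB _ IH] G_true.
  have [|p pD vp] := valuation_base_axiom_sound rB.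
    by move=> p pG; apply: G_true; rewrite inE pG orbT.
  by exists p; rewrite // inE pD.
case: rB => [[G1 [D1 [p E]]] | [[p [vp E]] | [q [vq E]]]]; case: E => ? ? ?; subst.
- have rB : valuation_base (Rule [::] (p |` G1, p |` D1)) by left; exists G1, D1, p.
  have [|r rD vr] := valuation_base_axiom_sound rB.
    by move=> r rG; apply: G_true; rewrite /= big_nil fset0U.
  by exists r; rewrite //= big_nil fsetU0.
- by exists p; rewrite //= big_nil fsetU0 inE.
- have [|r] := IH 0 erefl.
    by move=> r; rewrite fsetU0 => rT; apply: G_true; rewrite /= big_cons big_nil !fsetU0.
  rewrite /= inE => /orP [/fset1P -> | rS] vr; first by rewrite vr in vq.
  by exists r; rewrite // big_cons big_nil fsetU0 fset0U.
Qed.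

Lemma valuation_base_consistent : ~ derivable valuation_base fset0 fset0.
Proof. by move=> /valuation_base_sound [] // p; rewrite inE. Qed.

Lemma derivable_cut_false_atom C G S q : extends valuation_base C -> ~~ v q ->
  q \in S -> derivable C G S -> derivable C G (S `\ q).
Proof.
move=> ext vq qS d.
have rC : C (Rule [:: (fset0, [fset q])] (fset0, fset0)) by apply: ext; right; right; exists q.
have := @d_mix C _ _ _ (fun _ => G) (fun _ => S `\ q) rC.
rewrite /= !big_cons !big_nil !fsetU0 ?fset0U; apply; case => // _ /=.
by rewrite fsetU0 fsetD1K.
Qed.

Lemma derivable_cut_false_atoms C Th S : extends valuation_base C ->
  derivable C fset0 S -> (forall p, p \in S -> p \in Th \/ ~~ v p) ->
  derivable C fset0 Th.
Proof.
move=> ext; move: {2}#|` S| (leqnn #|` S|) => k.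
elim: k S => [|k IH] S le_Sk d S_Th;
  have [sub | /fsubsetPn [p pS pTh]] := boolP (S `<=` Th);
  try exact: derivable_subr d sub.
  by move: le_Sk; rewrite (cardfsD1 p) pS.
have vp : ~~ v p by case: (S_Th p pS) => //; rewrite (negbTE pTh).
apply: (IH (S `\ p)); first by move: le_Sk; rewrite (cardfsD1 p) pS.
  exact: derivable_cut_false_atom.
by move=> r /fsetD1P [_ /S_Th].
Qed.

End ValuationBase.

Lemma supp_of_derivable n C D Th : measure D < n ->
  derivable C fset0 Th -> atomset Th `<=` D -> supp n C D.
Proof.
elim: n C D Th => // n IH C D Th lt_Dn d sub /=.
case Hp: (principal D) => [F|]; last first.
  apply: derivable_subr d _; apply/fsubsetP => p pTh; rewrite mem_atoms_of.
  by apply: (fsubsetP sub); rewrite mem_atomset.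
have [FD nF] := principal_Some Hp.
have subG : atomset Th `<=` D `\ F.
  apply/fsubsetP => x xTh; rewrite in_fsetD1 (fsubsetP sub _ xTh) andbT.
  by apply: contraTneq xTh => ->; exact: notin_atomset.
case: F nF FD {Hp} subG => [p||A B|A B|A B] //= _ FD subG.
- by apply: IH d subG; have := measureD1 FD => /=; lia.
- have := measure_replace1 (A := A) FD; have := measure_replace1 (A := B) FD => /= mB mA.
  by split; apply: IH d (fsubset_trans subG (fsubsetU1 _ _)); lia.
- have := measure_replace2 (A := A) (B := B) FD => /= mAB.
  apply: IH d _; first lia.
  exact: fsubset_trans subG (fsubset_trans (fsubsetU1 _ _) (fsubsetU1 _ _)).
- move=> C' ext Th' _; have := measure_replace1 (A := B) FD => /= mB.
  apply: IH (derivable_ext ext d) _; first by have := measure_atomsetU Th' (B |` (D `\ Imp A B)); lia.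
  exact: fsubset_trans subG (fsubset_trans (fsubsetU1 _ _) (fsubsetUr _ _)).
Qed.

Section TruthLemma.

Variable v : atom -> bool.

(* The two halves of the truth lemma, proved by simultaneous induction on the
   fuel: the implication clause of each half uses the other. *)
Definition supp_of_true n := forall C D, extends (valuation_base v) C ->
  measure D < n -> (exists2 F, F \in D & eval v F) -> supp n C D.

Definition derivable_of_supp n := forall C D Th, extends (valuation_base v) C ->
  measure D < n -> (forall F, F \in D -> F \in atomset Th \/ ~~ eval v F) ->
  supp n C D -> derivable C fset0 Th.

Lemma supp_of_true_step n :
  supp_of_true n -> derivable_of_supp n -> supp_of_true n.+1.
Proof.
move=> IHT IHE C D ext lt_Dn [X XD eX] /=.
case Hp: (principal D) => [F|]; last first.
  have := principal_None Hp XD; case: X XD eX => // p pD vp _.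
  have : derivable C (fset0 `|` fset0) ([fset p] `|` atoms_of D).
    by apply: d_axiom; apply: ext; right; left; exists p.
  rewrite fsetU0 => d; apply: derivable_subr d _; apply/fsubsetP => r.
  by rewrite inE => /orP [/fset1P -> | //]; rewrite mem_atoms_of.
have [FD nF] := principal_Some Hp.
move: XD; rewrite -{1}(fsetD1K FD) => /fset1UP XF.
case: F nF FD {Hp} XF => [p||A B|A B|A B] //= _ FD XF.
- apply: IHT => //; first by have := measureD1 FD => /=; lia.
  by case: XF => [EX | XG]; [rewrite EX in eX | exists X].
- have := measure_replace1 (A := A) FD; have := measure_replace1 (A := B) FD.
  move=> /= mB mA; case: XF => [EX | XG].
    move: eX; rewrite EX => /andP [eA eB].
    by split; apply: IHT => //; [lia | exists A | lia | exists B]; rewrite ?fset1U1.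
  by split; apply: IHT => //; [lia | exists X | lia | exists X]; rewrite ?fset1Ur.
- have := measure_replace2 (A := A) (B := B) FD => /= mAB.
  apply: IHT => //; first lia.
  case: XF => [EX | XG]; last by exists X; rewrite // !fset1Ur.
  move: eX; rewrite EX => /orP [eA | eB].
    by exists A; rewrite ?fset1U1.
  by exists B; rewrite // fset1Ur ?fset1U1.
- move=> C' ext' Th HA; have ext'' : extends (valuation_base v) C' by move=> r /ext /ext'.
  have := measure_replace1 (A := B) FD; have := measure_replace1 (A := A) FD.
  have := measure_atomsetU Th (B |` (D `\ Imp A B)); have := measure_atomsetU Th [fset A].
  have := measureD1 FD; rewrite measure1 /= => mD mA' mB' mA mB.
  case: XF => [EX | XG]; last first.
    apply: (IHT _ _ ext''); first lia.
    by exists X; rewrite // in_fsetU fset1Ur ?orbT.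
  move: eX; rewrite EX /= => eAB; case eB: (eval v B).
    apply: (IHT _ _ ext''); first lia.
    by exists B; rewrite // in_fsetU fset1U1 orbT.
  have nA : ~~ eval v A by move: eAB; rewrite eB implybF.
  apply: supp_of_derivable (fsubsetUl _ _); first lia.
  apply: (IHE C' _ Th ext'' _ _ HA); first lia.
  by move=> Y /fsetUP [| /fset1P ->]; [left | right].
Qed.

Lemma derivable_of_supp_step n :
  supp_of_true n -> derivable_of_supp n -> derivable_of_supp n.+1.
Proof.
move=> IHT IHE C D Th ext lt_Dn D_false /=.
case Hp: (principal D) => [F|] sD; last first.
  apply: (derivable_cut_false_atoms ext sD) => p.
  by rewrite mem_atoms_of => /D_false []; [rewrite mem_atomset; left | right].
have [FD nF] := principal_Some Hp.
have G_false Y : Y \in D `\ F -> Y \in atomset Th \/ ~~ eval v Y.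
  by move=> /fsetD1P [_ /D_false].
have nF' : ~~ eval v F.
  by case: (D_false F FD) => //; rewrite (negbTE (notin_atomset _ nF)).
case: F nF FD {Hp} G_false nF' sD => [p||A B|A B|A B] //= _ FD G_false nF sD.
- by apply: (IHE _ _ _ ext _ G_false sD); have := measureD1 FD => /=; lia.
- have := measure_replace1 (A := A) FD; have := measure_replace1 (A := B) FD.
  move=> /= mB mA; case: sD => sA sB; case eA: (eval v A).
    apply: (IHE _ _ _ ext _ _ sB); first lia.
    by move=> Y /fset1UP [-> | /G_false //]; right; move: nF; rewrite eA.
  apply: (IHE _ _ _ ext _ _ sA); first lia.
  by move=> Y /fset1UP [-> | /G_false //]; right; rewrite eA.
- have := measure_replace2 (A := A) (B := B) FD => /= mAB.
  apply: (IHE _ _ _ ext _ _ sD); first lia.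
  move: nF; rewrite negb_or => /andP [nA nB].
  by move=> Y /fset1UP [-> | /fset1UP [-> | /G_false //]]; right.
- move: nF; rewrite negb_imply => /andP [eA nB].
  have := measureD1 FD; have := measure_replace1 (A := B) FD.
  have := measure_atomsetU fset0 (B |` (D `\ Imp A B)).
  have := measure_atomsetU fset0 [fset A].
  rewrite measure1 /= => mA' mB' mB mD.
  have sA : supp n C (atomset fset0 `|` [fset A]).
    by apply: IHT => //; [lia | exists A; rewrite // in_fsetU in_fset1 eqxx orbT].
  apply: (IHE _ _ _ ext _ _ (sD C (fun r h => h) fset0 sA)); first lia.
  move=> Y /fsetUP [| /fset1UP [-> | /G_false //]]; last by right.
  by rewrite atomset0 inE.
Qed.

Lemma supp_truth n : supp_of_true n /\ derivable_of_supp n.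
Proof.
elim: n => [|n [IHT IHE]]; first by split.
by split; [exact: supp_of_true_step | exact: derivable_of_supp_step].
Qed.

End TruthLemma.

Definition classically_valid (G D : {fset formula}) : Prop :=
  forall v, (forall A, A \in G -> eval v A) -> exists2 B, B \in D & eval v B.

Lemma CLp_Rand_shared G D A B :
  CLp G (A |` D) -> CLp G (B |` D) -> CLp G (And A B |` D).
Proof. by move=> hA hB; have := CLp_Rand hA hB; rewrite !fsetUid. Qed.

Lemma CLp_Lor_shared G D A B :
  CLp (A |` G) D -> CLp (B |` G) D -> CLp (Or A B |` G) D.
Proof. by move=> hA hB; have := CLp_Lor hA hB; rewrite !fsetUid. Qed.

Lemma CLp_Limp_shared G D A B :
  CLp G (A |` D) -> CLp (B |` G) D -> CLp (Imp A B |` G) D.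
Proof. by move=> hA hB; have := CLp_Limp hA hB; rewrite !fsetUid. Qed.

Lemma CLp_complete_atomic G D : principal G = None -> principal D = None ->
  classically_valid G D -> CLp G D.
Proof.
move=> G_atomic D_atomic valid.
have [|B BD eB] := valid (fun p => Atom p \in G).
  by move=> A AG; have := principal_None G_atomic AG; case: A AG.
have := principal_None D_atomic BD; case: B BD eB => // p pD pG _.
by rewrite -(fsetD1K pG) -(fsetD1K pD); exact: CLp_init.
Qed.

Section CompletenessStep.

Variables G D : {fset formula}.
Hypothesis IH : forall G' D', measure G' + measure D' < measure G + measure D ->
  classically_valid G' D' -> CLp G' D'.
Hypothesis valid : classically_valid G D.

Lemma CLp_complete_left F : principal G = Some F -> CLp G D.
Proof.
move=> Hp; have [FG nF] := principal_Some Hp.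
have valid_rest v : eval v F -> (forall Y, Y \in G `\ F -> eval v Y) ->
    exists2 B, B \in D & eval v B.
  by move=> eF eG; apply: valid => Y; rewrite -(fsetD1K FG) => /fset1UP [-> | /eG].
rewrite -(fsetD1K FG).
case: F nF FG {Hp} valid_rest => [p||A B|A B|A B] //= _ FG valid_rest.
- exact: CLp_Lbot.
- apply/CLp_Land/IH; first by have := measure_replace2 (A := A) (B := B) FG => /=; lia.
  move=> v eG; apply: valid_rest => [|Y YG].
    by rewrite (eG A) ?fset1U1 // (eG B) // fset1Ur ?fset1U1.
  by apply: eG; rewrite !fset1Ur.
- have := measure_replace1 (A := A) FG; have := measure_replace1 (A := B) FG.
  move=> /= mB mA; apply: CLp_Lor_shared; apply: IH; try lia.
  + move=> v eG; apply: valid_rest => [|Y YG]; last by apply: eG; rewrite fset1Ur.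
    by rewrite (eG A) ?fset1U1.
  + move=> v eG; apply: valid_rest => [|Y YG]; last by apply: eG; rewrite fset1Ur.
    by rewrite (eG B) ?fset1U1 ?orbT.
- have := measureD1 FG; have := measureU1 A D; have := measure_replace1 (A := B) FG.
  move=> /= mB mA mG; apply: CLp_Limp_shared; apply: IH; try lia.
  + move=> v eG; case eA: (eval v A); first by exists A; rewrite ?fset1U1.
    have [|Y YD eY] := valid_rest v _ eG; first by rewrite eA.
    by exists Y; rewrite ?fset1Ur.
  + move=> v eG; apply: valid_rest => [|Y YG]; last by apply: eG; rewrite fset1Ur.
    by rewrite (eG B) ?fset1U1 ?implybT.
Qed.

Lemma CLp_complete_right F : principal D = Some F -> CLp G D.
Proof.
move=> Hp; have [FD nF] := principal_Some Hp.
have valid_rest v : (forall Y, Y \in G -> eval v Y) ->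
    eval v F \/ exists2 B, B \in D `\ F & eval v B.
  move=> /valid [Y]; rewrite -{1}(fsetD1K FD) => /fset1UP [-> | YD] eY; first by left.
  by right; exists Y.
rewrite -(fsetD1K FD).
case: F nF FD {Hp} valid_rest => [p||A B|A B|A B] //= _ FD valid_rest.
- apply/CLp_Rbot/IH; first by have := measureD1 FD => /=; lia.
  by move=> v /valid_rest [].
- have := measure_replace1 (A := A) FD; have := measure_replace1 (A := B) FD.
  move=> /= mB mA; apply: CLp_Rand_shared; apply: IH; try lia.
  + move=> v /valid_rest [/andP [eA _] | [Y YD eY]]; first by exists A; rewrite ?fset1U1.
    by exists Y; rewrite ?fset1Ur.
  + move=> v /valid_rest [/andP [_ eB] | [Y YD eY]]; first by exists B; rewrite ?fset1U1.
    by exists Y; rewrite ?fset1Ur.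
- apply/CLp_Ror/IH.
    by have := measure_replace2 (A := A) (B := B) FD => /=; lia.
  move=> v /valid_rest [/orP [eA | eB] | [Y YD eY]]; first by exists A; rewrite ?fset1U1.
    by exists B; rewrite // fset1Ur ?fset1U1.
  by exists Y; rewrite // !fset1Ur.
- have := measureD1 FD; have := measureU1 A G; have := measureU1 B (D `\ Imp A B).
  move=> /= mB mA mD; apply/CLp_Rimp/IH; first lia.
  move=> v eAG; have eA : eval v A by apply: eAG; rewrite fset1U1.
  have [|/(implyP)/(_ eA) eB | [Y YD eY]] := valid_rest v.
  + by move=> Y YG; apply: eAG; rewrite fset1Ur.
  + by exists B; rewrite ?fset1U1.
  + by exists Y; rewrite ?fset1Ur.
Qed.

End CompletenessStep.

Lemma CLp_complete G D : classically_valid G D -> CLp G D.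
Proof.
move: {2}(measure G + measure D) (erefl (measure G + measure D)) => n.
elim/ltn_ind: n G D => n IHn G D mGD valid.
have IH G' D' : measure G' + measure D' < measure G + measure D ->
    classically_valid G' D' -> CLp G' D'.
  by rewrite mGD => lt_n; exact: IHn lt_n _ _ erefl.
case HG: (principal G) => [F|]; first exact: (CLp_complete_left IH valid HG).
case HD: (principal D) => [F|]; first exact: (CLp_complete_right IH valid HD).
exact: CLp_complete_atomic.
Qed.

Lemma support_valuation_base v D : Defs.support (valuation_base v) D ->
  exists2 B, B \in D & eval v B.
Proof.
move=> sD; have [/hasP [B BD eB] | /hasPn D_false] := boolP (has (eval v) D).
  by exists B.
case: (valuation_base_consistent (v := v)).
apply: ((supp_truth v _).2 _ D fset0 (fun r h => h) (ltnSn _) _ sD) => B BD.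
by right; exact: D_false.
Qed.

Lemma support_true_formula v C A : extends (valuation_base v) C -> eval v A ->
  Defs.support C (atomset fset0 `|` [fset A]).
Proof.
move=> ext eA; apply: (supp_truth v _).1 => //.
by exists A; rewrite // in_fsetU in_fset1 eqxx orbT.
Qed.

Theorem theorem4 (G D : {fset formula}) : cf_valid G D -> CLp G D.
Proof.
move=> cfv; apply: CLp_complete => v G_true.
apply: support_valuation_base.
have := cfv _ (HS_valuation_base v); rewrite /consequence; case: eqP => // _.
move=> /(_ _ (fun r h => h) (fun _ => fset0)).
rewrite big1 ?fset0U => [|A _]; last exact: atomset0.
apply=> A AG; exact: support_true_formula (G_true A AG).
Qed.
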